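(* Every right Rees artinian, left cancellative monoid is a group or a 0-group.
   Context: A monoid $S$ is right Rees artinian if its right ideals satisfy the descending chain condition. $S$ is left cancellative if $ab=ac$ implies $b=c$. A 0-group is a group with an externally adjoined zero. *)

Record Monoid : Type := {
  carrier :> Type;
  mul : carrier -> carrier -> carrier;
  one : carrier;
  mulA : forall a b c, mul a (mul b c) = mul (mul a b) c;
  mul1l : forall a, mul one a = a;
  mul1r : forall a, mul a one = a
}.

Arguments mul {m} _ _.
Arguments one {m}.

Definition right_ideal (M : Monoid) (I : M -> Prop) : Prop :=
  (exists x, I x) /\ (forall x s : M, I x -> I (mul x s)).

Definition right_Rees_artinian (M : Monoid) : Prop :=
  forall I : nat -> (M -> Prop),
    (forall n, right_ideal M (I n)) ->
    (forall n (x : M), I (Datatypes.S n) x -> I n x) ->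
    exists N, forall n, N <= n -> forall x : M, I n x <-> I N x.

Definition left_cancellative (M : Monoid) : Prop :=
  forall a b c : M, mul a b = mul a c -> b = c.

Definition is_group (M : Monoid) : Prop :=
  forall x : M, exists y : M, mul x y = one /\ mul y x = one.

Definition is_zero_group (M : Monoid) : Prop :=
  exists z : M,
    (forall x : M, mul z x = z /\ mul x z = z) /\
    one <> z /\
    (forall x y : M, x <> z -> y <> z -> mul x y <> z) /\
    (forall x : M, x <> z -> exists y : M, y <> z /\ mul x y = one /\ mul y x = one).

(* For x in M consider the descending chain of principal right ideals
       M ⊇ xM ⊇ x²M ⊇ x³M ⊇ ...
   By the descending chain condition it stabilises, so x^N ∈ x^(N+1) M, i.e.
   x^N·1 = x^N·(x s) for some s; left cancellation gives x s = 1.  Hence every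
   element has a right inverse, and a monoid in which every element has a right
   inverse is a group (the right inverse of a right inverse of x is x itself).
   In particular the "group" alternative of the theorem always holds: with left
   cancellation an adjoined zero z would force a = b from z a = z b. *)


Section PrincipalRightIdeals.

Variable M : Monoid.

Fixpoint pow (x : M) (n : nat) : M :=
  match n with
  | O => one
  | Datatypes.S k => mul (pow x k) x
  end.

Definition principal_right_ideal (a : M) (y : M) : Prop :=
  exists s, y = mul a s.

Lemma principal_right_ideal_self (a : M) : principal_right_ideal a a.
Proof. exists one. now rewrite mul1r. Qed.

Lemma principal_right_ideal_is_right_ideal (a : M) :
  right_ideal M (principal_right_ideal a).
Proof.
  split.
  - exists a. apply principal_right_ideal_self.
  - intros y t [s ->]. exists (mul s t). now rewrite mulA.
Qed.

Lemma pow_ideal_descending (x : M) (n : nat) (y : M) :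
  principal_right_ideal (pow x (Datatypes.S n)) y ->
  principal_right_ideal (pow x n) y.
Proof. intros [s ->]. exists (mul x s). simpl. now rewrite mulA. Qed.

Lemma pow_ideal_stabilises (x : M) :
  right_Rees_artinian M ->
  exists N s, pow x N = mul (pow x (Datatypes.S N)) s.
Proof.
  intros Hartin.
  destruct (Hartin (fun n => principal_right_ideal (pow x n))) as [N HN].
  - intros n. apply principal_right_ideal_is_right_ideal.
  - apply pow_ideal_descending.
  - destruct (proj2 (HN (Datatypes.S N) (le_S _ _ (le_n N)) (pow x N))
               (principal_right_ideal_self _)) as [s Hs].
    now exists N, s.
Qed.

(* Hence, with left cancellation, every element has a right inverse:
   x^N · 1 = x^N · (x s) cancels to x s = 1. *)
Lemma right_inverse_exists (x : M) :
  right_Rees_artinian M -> left_cancellative M ->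
  exists s, mul x s = one.
Proof.
  intros Hartin Hcancel.
  destruct (pow_ideal_stabilises x Hartin) as [N [s Hs]].
  exists s. apply (Hcancel (pow x N)).
  simpl in Hs. now rewrite mulA, <- Hs, mul1r.
Qed.

(* A monoid in which every element has a right inverse is a group: if x s = 1
   and s t = 1 then x = x (s t) = (x s) t = t, so s is a two-sided inverse. *)
Lemma group_of_right_inverses :
  (forall x : M, exists s, mul x s = one) -> is_group M.
Proof.
  intros Hinv x.
  destruct (Hinv x) as [s Hxs].
  destruct (Hinv s) as [t Hst].
  assert (Hxt : x = t).
  { now rewrite <- (mul1r M x), <- Hst, mulA, Hxs, mul1l. }
  subst t. now exists s.
Qed.

End PrincipalRightIdeals.

Theorem mainTheorem18 (S : Monoid) :
  right_Rees_artinian S -> left_cancellative S -> is_group S \/ is_zero_group S.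
Proof.
  intros Hartin Hcancel. left.
  apply group_of_right_inverses.
  intros x. exact (right_inverse_exists S x Hartin Hcancel).
Qed.
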